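(* Consider a run of Dynamic A* (with \texttt{reeval} true or false) using a dyn-safe dynamic heuristic, and an iteration $i$ of it. Let $s$ be a state settled in iteration $i$, and let $s'$ be a state with $h^*(s')<\infty$ such that there is an optimal path $\langle t_1,\dots,t_n\rangle$ from $s_I$ to $s'$ with $t_n=\langle s,\ell,s'\rangle$. Then at the beginning of iteration $i$, either Open contains an entry $\langle s',\hat g,\cdot\rangle$ with $\hat g=g^*(s')$, or $s'$ is settled in iteration $i$.
   Context: A transition system is $\mathcal T=\langle S,L,c,T,s_I,S_G\rangle$ with finite states $S$, finite labels $L$, cost function $c:L\to\mathbb R_{\ge0}$, transitions $T\subseteq S\times L\times S$, initial state $s_I$, goal states $S_G\subseteq S$. Paths, costs, solutions (paths from $s_I$ to a goal state) are as usual; $g^*(s)$ is the cost of an optimal path from $s_I$ to $s$ and $h^*(s)$ the minimal cost of a path from $s$ to a goal ($\infty$ if none). An information source $\sigma$ consists of a set $\mathcal I_\sigma$, $\iota_0^\sigma\in\mathcal I_\sigma$, $\mathrm{update}_\sigma:\mathcal I_\sigma\times T\to\mathcal I_\sigma$, $\mathrm{refine}_\sigma:\mathcal I_\sigma\times S\to\mathcal I_\sigma$. Reachable information: $\iota_n$ is reachable if obtained from $\iota_0^\sigma$ by a sequence of refine steps on states and update steps on transitions $e_1,\dots,e_n$, where each refined state and each origin of an updated transition is $s_I$ or the target of an earlier updated transition. A dynamic heuristic over $\sigma$ is $h:S\times\mathcal I_\sigma\to\mathbb R_{\ge0}\cup\{\infty\}$; it is dyn-safe if $h(s,\iota)=\infty$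 implies $h^*(s)=\infty$ for all $s$ and reachable $\iota$. Parent source $\sigma_p$: $\mathcal I_{\sigma_p}$ = partial functions $S\rightharpoonup\mathbb R_{\ge0}\times(T\cup\{\bot\})$; $\iota_0=\{s_I\mapsto\langle0,\bot\rangle\}$; refine is the identity; $\mathrm{update}(\iota,\langle s,\ell,s'\rangle)$ with $\iota(s)=\langle g,\cdot\rangle$ changes only $s'$, setting it to $\langle g+c(\ell),\langle s,\ell,s'\rangle\rangle$ if $\iota(s')$ is undefined or has $g$-component $\ge g+c(\ell)$, otherwise unchanged. Dynamic A* takes $\mathcal T$, sources $\sigma_p,\sigma_h$, a dynamic heuristic $h$ over $\sigma_h$ and a Boolean flag \texttt{reeval}. Notation: at any moment $g(s)$ is the $g$-component of the current $\mathcal I(\sigma_p)(s)$ and $h(s)$ denotes $h(s,\mathcal I(\sigma_h))$ for the current $\mathcal I(\sigma_h)$. Open is a priority queue of entries $\langle s,g,h\rangle$ (duplicates allowed), popped by minimal stored value $g+h$ (ties arbitrary). Algorithm: 1. $\mathcal I(\sigma):=\iota_0^\sigma$ for both sources; $S_{\mathrm{known}}:=\{s_I\}$; Closed $:=\emptyset$; Open empty. If $h(s_I)<\infty$ insert $\langle s_I,g(s_I),h(s_I)\rangle$. 2. While Open is nonempty: pop an entry $\langle s,\hat g,\hat h\rangle$ of minimal $\hat g+\hat h$. If $s\in$ Closed, continue with the next iteration. Otherwise set $\mathcal I(\sigma):=\mathrm{refine}_\sigma(\mathcal I(\sigma),s)$ for both sources. If \texttt{reeval} is true and $\hat h<h(s)$: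 if $h(s)<\infty$ insert $\langle s,g(s),h(s)\rangle$; continue with the next iteration (this is a re-evaluation). Otherwise add $s$ to Closed ($s$ is expanded). If $s\in S_G$, return the path obtained by following the parent pointers of $\mathcal I(\sigma_p)$ from $s$ back to $s_I$. Otherwise, for each $t=\langle s,\ell,s'\rangle\in T$ in some order: let $old:=g(s')$ if $s'\in S_{\mathrm{known}}$ and undefined otherwise; set $\mathcal I(\sigma):=\mathrm{update}_\sigma(\mathcal I(\sigma),t)$ for both sources; add $s'$ to $S_{\mathrm{known}}$; if $h(s')=\infty$ skip $s'$; else if $old$ is undefined insert $\langle s',g(s'),h(s')\rangle$; else if $old>g(s')$, remove $s'$ from Closed if it is there (reopening) and insert $\langle s',g(s'),h(s')\rangle$. 3. Return ''unsolvable''. Times: the iterations of the while loop are numbered $i=1,2,\dots$ (iteration $i$ begins just before its pop); within iteration $i$ a step counter $j$ is $0$ at the start, becomes $1$ after the refine step, and increases by $1$ after each update step on a successor transition. Time $\langle i,j\rangle$ (time $\langle0,0\rangle$ is the initialization) is ordered lexicographically, and $g^{i,j}(s)$, $h^{i,j}(s)$ denote $g(s)$ and $h(s)$ with the information current at that time. A state $s$ is settled in iteration $i$ if it was expanded (added to Closed) in some iteration $i'<i$ with $g^{i',0}(s)=g^*(s)$. *)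

(* Model of Dynamic A* (nondeterministic: arbitrary tie
   breaking, arbitrary successor order, arbitrary heuristic source). *)
From HB Require Import structures.
From mathcomp Require Import all_boot all_order all_algebra.
Import Order.TTheory GRing.Theory Num.Theory.
Local Open Scope ring_scope.

Section DynAStar.
Variable R : realFieldType.
Variables S L : finType.

Definition trans := (S * L * S)%type.
Definition src (t : trans) : S := t.1.1.
Definition lab (t : trans) : L := t.1.2.
Definition tgt (t : trans) : S := t.2.

Inductive event := ESkip | EReeval | EExpand of S.

(* information of the parent source sigma_p:
   partial functions S -/-> R x (T u {bot}); None = undefined, bot = None *)
Definition pinfo := S -> option (R * option trans).

(* Extended nonnegative heuristic values: None stands for infinity. *)
Definition lt_ext (r : R) (o : option R) : bool :=
  match o with Some x => r < x | None => true end.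

(* Open entries <s, g, h> *)
Definition entry := (S * R * R)%type.

Variable c : L -> R.
Variable T : {set trans}.
Variable sI : S.
Variable SG : {set S}.

Fixpoint is_path (x : S) (p : seq trans) (y : S) : Prop :=
  match p with
  | [::] => x = y
  | t :: p' => [/\ t \in T, src t = x & is_path (tgt t) p' y]
  end.

Definition path_cost (p : seq trans) : R := \sum_(t <- p) c (lab t).

Definition hstar_finite (x : S) : Prop :=
  exists p y, is_path x p y /\ y \in SG.

Definition is_gstar (x : S) (v : R) : Prop :=
  (exists p, is_path sI p x /\ path_cost p = v) /\
  (forall p, is_path sI p x -> v <= path_cost p).

Definition optimal_path (p : seq trans) (x : S) : Prop :=
  is_path sI p x /\ (forall q, is_path sI q x -> path_cost p <= path_cost q).

Definition pinit : pinfo :=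
  fun x => if x == sI then Some (0, None) else None.

Definition pupdate (i : pinfo) (t : trans) : pinfo :=
  match i (src t) with
  | None => i
  | Some (g, _) =>
      let g' := g + c (lab t) in
      let ok := match i (tgt t) with Some (g0, _) => g' <= g0 | None => true end in
      if ok then (fun x => if x == tgt t then Some (g', Some t) else i x) else i
  end.

(* g-component (only used at states where it is defined) *)
Definition gval (i : pinfo) (x : S) : R :=
  match i x with Some (g, _) => g | None => 0 end.

(* A generic information source sigma_h and a dynamic heuristic over it *)
Variable Ih : Type.
Variable ih0 : Ih.
Variable hupd : Ih -> trans -> Ih.
Variable href : Ih -> S -> Ih.
Variable h : S -> Ih -> option R.

(* reachable information; K = states that are s_I or targets of
   previously updated transitions *)
Inductive reach_info : Ih -> {set S} -> Prop :=
| RI0 : reach_info ih0 [set sI]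
| RIref i K x : reach_info i K -> x \in K -> reach_info (href i x) K
| RIupd i K t : reach_info i K -> t \in T -> src t \in K ->
                reach_info (hupd i t) (tgt t |: K).

Definition reachable_info (i : Ih) : Prop := exists K, reach_info i K.

Definition dyn_safe : Prop :=
  forall i, reachable_info i -> forall x, h x i = None -> ~ hstar_finite x.

Record config := Config {
  cp : pinfo;
  ch : Ih;
  known : {set S};
  closed : {set S};
  open : seq entry       (* Open (a multiset) *)
}.

Definition init_config : config :=
  Config pinit ih0 [set sI] set0
    (match h sI ih0 with Some hv => [:: (sI, gval pinit sI, hv)] | None => [::] end).

Definition process_succ (cf : config) (t : trans) : config :=
  let s' := tgt t in
  let old := if s' \in known cf then Some (gval (cp cf) s') else None in
  let p' := pupdate (cp cf) t in
  let h' := hupd (ch cf) t in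
  let K' := s' |: known cf in
  match h s' h' with
  | None => Config p' h' K' (closed cf) (open cf)
  | Some hv =>
      match old with
      | None => Config p' h' K' (closed cf) ((s', gval p' s', hv) :: open cf)
      | Some o =>
          if gval p' s' < o
          then Config p' h' K' (closed cf :\ s') ((s', gval p' s', hv) :: open cf)
          else Config p' h' K' (closed cf) (open cf)
      end
  end.

Definition min_entry (o : seq entry) (e : entry) : Prop :=
  forall e', e' \in o -> e.1.2 + e.2 <= e'.1.2 + e'.2.

(* one (non-terminating) iteration of the while loop *)
Inductive iter_step (reeval : bool) : config -> event -> config -> Prop :=
| StSkip cf o1 o2 e :
    open cf = o1 ++ e :: o2 -> min_entry (open cf) e ->
    e.1.1 \in closed cf ->
    iter_step reeval cf ESkip (Config (cp cf) (ch cf) (known cf) (closed cf) (o1 ++ o2))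
| StReeval cf o1 o2 e :
    open cf = o1 ++ e :: o2 -> min_entry (open cf) e ->
    e.1.1 \notin closed cf ->
    reeval -> lt_ext e.2 (h e.1.1 (href (ch cf) e.1.1)) ->
    iter_step reeval cf EReeval
      (Config (cp cf) (href (ch cf) e.1.1) (known cf) (closed cf)
         (match h e.1.1 (href (ch cf) e.1.1) with
          | Some hv => (e.1.1, gval (cp cf) e.1.1, hv) :: (o1 ++ o2)
          | None => o1 ++ o2 end))
| StExpand cf o1 o2 e ts :
    open cf = o1 ++ e :: o2 -> min_entry (open cf) e ->
    e.1.1 \notin closed cf ->
    ~~ (reeval && lt_ext e.2 (h e.1.1 (href (ch cf) e.1.1))) ->
    e.1.1 \notin SG ->
    uniq ts -> (forall t, (t \in ts) = (t \in T) && (src t == e.1.1)) ->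
    iter_step reeval cf (EExpand e.1.1)
      (foldl process_succ
         (Config (cp cf) (href (ch cf) e.1.1) (known cf) (e.1.1 |: closed cf) (o1 ++ o2))
         ts).

(* x is settled in iteration i of the run (run k = configuration at the
   beginning of iteration k, ev k = what iteration k did) *)
Definition settled (run : nat -> config) (ev : nat -> event) (i : nat) (x : S) : Prop :=
  exists i', [/\ (1 <= i' < i)%N, ev i' = EExpand x &
    exists g par, cp (run i') x = Some (g, par) /\ is_gstar x g].

End DynAStar.

From Pilot Require Import Defs.
From HB Require Import structures.
From mathcomp Require Import all_boot all_order all_algebra.
Import Order.TTheory GRing.Theory Num.Theory.
Local Open Scope ring_scope.

(* Every g-value the parent source records is the cost of an actual path from
   s_I, so it never drops below g^*.  When the settled predecessor s was
   expanded with g(s) = g^*(s), the update along <s,l,s'> brought g(s') down to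
   g^*(s) + c(l) = g^*(s'), where it stays.  It remains to see that while
   g(s') = g^*(s'), Open holds an entry <s', g^*(s'), _> unless s' is settled:
   the entry is pushed when g(s') reaches g^*(s'), and popping it either skips
   s' because it is closed (so it was expanded with g^*(s'), i.e. settled),
   re-evaluates s' and pushes it again, or expands s', which settles it.
   Dyn-safety keeps h(s') finite under every reachable information, so neither
   the push nor the re-evaluation ever discards s'. *)

Set Implicit Arguments.
Unset Strict Implicit.

Lemma mem_cat_cons (A : eqType) (s1 s2 : seq A) y x :
  (x \in s1 ++ y :: s2) = (x == y) || (x \in s1 ++ s2).
Proof. by rewrite !mem_cat in_cons orbCA. Qed.

Lemma nat_ind_between (P : nat -> Prop) j n :
  P j -> (forall k, (j <= k < n)%N -> P k -> P k.+1) ->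
  forall k, (j <= k <= n)%N -> P k.
Proof.
move=> Pj IH; elim=> [|k IHk] /andP[jk kn].
  by move: jk; rewrite leqn0 => /eqP <-.
move: jk; rewrite leq_eqVlt ltnS => /orP[/eqP <- // | jk].
by apply: IH; [rewrite jk | apply: IHk; rewrite jk ltnW].
Qed.

Section DynamicAStar.
Variable R : realFieldType.
Variables S L : finType.
Variable c : L -> R.
Variable T : {set trans S L}.
Variable sI : S.
Variable SG : {set S}.
Variable Ih : Type.
Variable ih0 : Ih.
Variable hupd : Ih -> trans S L -> Ih.
Variable href : Ih -> S -> Ih.
Variable h : S -> Ih -> option R.

Local Notation config := (Pilot.Defs.config R S L Ih).
Local Notation Config := (Pilot.Defs.Config R S L Ih).
Local Notation EExpand := (Pilot.Defs.EExpand S).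
Local Notation is_path := (Pilot.Defs.is_path S L T).
Local Notation path_cost := (Pilot.Defs.path_cost R S L c).
Local Notation src := (Pilot.Defs.src S L).
Local Notation tgt := (Pilot.Defs.tgt S L).
Local Notation lab := (Pilot.Defs.lab S L).
Local Notation pupdate := (Pilot.Defs.pupdate R S L c).
Local Notation gval := (Pilot.Defs.gval R S L).
Local Notation process_succ := (Pilot.Defs.process_succ R S L c Ih hupd h).
Local Notation cp := (Pilot.Defs.cp R S L Ih).
Local Notation ch := (Pilot.Defs.ch R S L Ih).
Local Notation known := (Pilot.Defs.known R S L Ih).
Local Notation closed := (Pilot.Defs.closed R S L Ih).
Local Notation open := (Pilot.Defs.open R S L Ih).
Local Notation reach_info := (Pilot.Defs.reach_info S L T sI Ih ih0 hupd href).
Local Notation iter_step := (Pilot.Defs.iter_step R S L c T SG Ih hupd href h).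

Lemma path_cost_rcons q t : path_cost (rcons q t) = path_cost q + c (lab t).
Proof. by rewrite /path_cost -cats1 big_cat big_seq1. Qed.

Lemma is_path_rcons x q t y :
  is_path x (rcons q t) y <-> [/\ is_path x q (src t), t \in T & tgt t = y].
Proof.
elim: q x => [|a q IH] x /=; first by split=> -[].
by split=> [[aT ax /IH[]] | [[aT ax qt] tT ty]] //; split=> //; apply/IH.
Qed.

Lemma optimal_path_gstar p x :
  optimal_path R S L c T sI p x -> is_gstar R S L c T sI x (path_cost p).
Proof. by case=> px p_min; split=> //; exists p. Qed.

Definition g_le (P : pinfo R S L) x v := exists g par, P x = Some (g, par) /\ g <= v.

Definition g_realized (P : pinfo R S L) :=
  forall x g par, P x = Some (g, par) -> exists q, is_path sI q x /\ path_cost q = g.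

Lemma g_realized_ge P x g par v : g_realized P -> P x = Some (g, par) ->
  (forall q, is_path sI q x -> v <= path_cost q) -> v <= g.
Proof. by move=> Preal /Preal[q [qx <-]]; apply. Qed.

Lemma pupdateP P t y :
  pupdate P t y = P y \/
  (y = tgt t /\ exists g par, [/\ P (src t) = Some (g, par),
     pupdate P t y = Some (g + c (lab t), Some t) &
     forall g0 par0, P y = Some (g0, par0) -> g + c (lab t) <= g0]).
Proof.
rewrite /pupdate; case Psrc: (P (src t)) => [[g par]|]; last by left.
case: ifP => improving /=; last by left.
case: eqP => [yt|]; last by left.
by right; split=> //; exists g, par; split=> // g0 par0 Py; move: improving; rewrite -yt Py.
Qed.

Lemma pupdate_g_le_tgt P t g par : P (src t) = Some (g, par) ->
  g_le (pupdate P t) (tgt t) (g + c (lab t)).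
Proof.
rewrite /g_le /pupdate => -> /=.
case Ptgt: (P (tgt t)) => [[g0 par0]|] /=; last by rewrite eqxx; exists (g + c (lab t)), (Some t).
case: ifP => [_|/negbT]; first by rewrite eqxx; exists (g + c (lab t)), (Some t).
by rewrite -ltNge => /ltW; exists g0, par0.
Qed.

Lemma pupdate_g_le P t x v : g_le P x v -> g_le (pupdate P t) x v.
Proof.
move=> [g [par [Px gv]]]; rewrite /g_le.
case: (pupdateP P t x) => [->|[_ [g1 [par1 [_ -> g1_min]]]]]; first by exists g, par.
by exists (g1 + c (lab t)), (Some t); split=> //; apply: le_trans (g1_min _ _ Px) gv.
Qed.

Lemma pupdate_defined P t y : isSome (P (src t)) ->
  isSome (pupdate P t y) = isSome (P y) || (y == tgt t).
Proof.
case Psrc: (P (src t)) => [[g par]|] // _.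
case: (pupdateP P t y) => [unchanged|[yt [g1 [par1 [_ -> _]]]]]; last by rewrite yt eqxx orbT.
rewrite -unchanged; case: eqP => [yt|_]; last by rewrite orbF.
by have [g' [par' []]] := pupdate_g_le_tgt Psrc; rewrite -yt => -> _.
Qed.

Lemma pupdate_g_realized P t : t \in T -> g_realized P -> g_realized (pupdate P t).
Proof.
move=> tT Preal x g par.
case: (pupdateP P t x) => [->|[xt [g1 [par1 [Psrc -> _]]]]]; first exact: Preal.
case=> <- _; rewrite xt; have [q [qt <-]] := Preal _ _ _ Psrc.
by exists (rcons q t); rewrite path_cost_rcons; split=> //; apply/is_path_rcons.
Qed.

Lemma cp_process_succ cf t : cp (process_succ cf t) = pupdate (cp cf) t.
Proof.
by rewrite /process_succ; case: (h _ _) => [hv|] //; case: (tgt t \in known cf) => //; case: ifP.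
Qed.

Lemma ch_process_succ cf t : ch (process_succ cf t) = hupd (ch cf) t.
Proof.
by rewrite /process_succ; case: (h _ _) => [hv|] //; case: (tgt t \in known cf) => //; case: ifP.
Qed.

Lemma known_process_succ cf t : known (process_succ cf t) = tgt t |: known cf.
Proof.
by rewrite /process_succ; case: (h _ _) => [hv|] //; case: (tgt t \in known cf) => //; case: ifP.
Qed.

Lemma closed_process_succ cf t : closed (process_succ cf t) \subset closed cf.
Proof.
rewrite /process_succ; case: (h _ _) => [hv|] /=; last exact: subxx.
by case: (tgt t \in known cf); [case: ifP => _|]; rewrite /= ?subsetDl ?subxx.
Qed.

Lemma open_process_succ_sub cf t : {subset open cf <= open (process_succ cf t)}.
Proof.
move=> e e_in; rewrite /process_succ; case: (h _ _) => [hv|] //.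
by case: (tgt t \in known cf); [case: ifP => _|]; rewrite /= ?in_cons e_in ?orbT.
Qed.

Lemma open_process_succ cf t e :
  e \in open (process_succ cf t) -> e \in open cf \/ e.1.1 = tgt t.
Proof.
rewrite /process_succ; case: (h _ _) => [hv|]; last by left.
case: (tgt t \in known cf); [case: ifP => _|]; rewrite /= ?in_cons; try by left.
all: by case/orP=> [/eqP-> | ]; [right | left].
Qed.

Definition wf_config (cf : config) :=
  [/\ g_realized (cp cf),
      forall x, (x \in known cf) = isSome (cp cf x),
      {in open cf, forall e, e.1.1 \in known cf},
      closed cf \subset known cf &
      reach_info (ch cf) (known cf)].

Lemma wf_process_succ cf t :
  wf_config cf -> t \in T -> src t \in known cf -> wf_config (process_succ cf t).
Proof.
move=> [Preal knownE open_known closed_known reach] tT src_known.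
have src_def : isSome (cp cf (src t)) by rewrite -knownE.
split; rewrite ?cp_process_succ ?ch_process_succ ?known_process_succ.
- exact: pupdate_g_realized.
- by move=> x; rewrite pupdate_defined // in_setU1 knownE orbC.
- move=> e /open_process_succ[/open_known e_known | ->]; rewrite in_setU1 ?eqxx //.
  by rewrite e_known orbT.
- apply: subset_trans (closed_process_succ cf t) _.
  by apply: subset_trans closed_known _; apply: subsetUr.
- exact: RIupd.
Qed.

Lemma foldl_process_succ_ind (P : config -> Prop) cf ts :
  (forall cf t, wf_config cf -> t \in T -> src t \in known cf -> P cf ->
     P (process_succ cf t)) ->
  {in ts, forall t, t \in T /\ src t \in known cf} ->
  wf_config cf -> P cf -> P (foldl process_succ cf ts).
Proof.
move=> P_succ; elim: ts cf => [|t ts IH] cf //= ts_ok wf_cf P_cf.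
have [tT src_known] := ts_ok t (mem_head t ts).
apply: IH; [| exact: wf_process_succ | exact: P_succ].
move=> t' t'_in; have [t'T src'_known] : t' \in T /\ src t' \in known cf.
  by apply: ts_ok; rewrite in_cons t'_in orbT.
by rewrite known_process_succ in_setU1 src'_known orbT.
Qed.

Lemma foldl_process_succ_g_le cf ts x v :
  g_le (cp cf) x v -> g_le (cp (foldl process_succ cf ts)) x v.
Proof.
elim: ts cf => [|t ts IH] cf //= le_v; apply: IH.
by rewrite cp_process_succ; apply: pupdate_g_le.
Qed.

Lemma foldl_process_succ_g_le_tgt cf ts t v : t \in ts -> g_le (cp cf) (src t) v ->
  g_le (cp (foldl process_succ cf ts)) (tgt t) (v + c (lab t)).
Proof.
elim: ts cf => [|t0 ts IH] cf //=; rewrite in_cons => /orP[/eqP -> | t_in] le_v.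
  apply: foldl_process_succ_g_le; rewrite cp_process_succ.
  have [g [par [Psrc gv]]] := le_v.
  have [g' [par' [Ptgt g'_le]]] := pupdate_g_le_tgt Psrc.
  by exists g', par'; split=> //; apply: le_trans g'_le _; rewrite lerD2r.
by apply: IH => //; rewrite cp_process_succ; apply: pupdate_g_le.
Qed.

Lemma known_popped cf o1 o2 e : wf_config cf -> open cf = o1 ++ e :: o2 ->
  e.1.1 \in known cf /\ {in o1 ++ o2, forall x, x.1.1 \in known cf}.
Proof.
move=> [_ _ open_known _ _] openE.
split; first by apply: open_known; rewrite openE mem_cat_cons eqxx.
by move=> x x_in; apply: open_known; rewrite openE mem_cat_cons x_in orbT.
Qed.

Lemma wf_expand_start cf o1 o2 e : wf_config cf -> open cf = o1 ++ e :: o2 ->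
  wf_config (Config (cp cf) (href (ch cf) e.1.1) (known cf) (e.1.1 |: closed cf) (o1 ++ o2)).
Proof.
move=> wf_cf /(known_popped wf_cf) [e_known rest_known].
have [Preal knownE _ closed_known reach] := wf_cf.
split=> //=; last exact: RIref.
by rewrite subUset sub1set e_known.
Qed.

Lemma wf_iter_step reeval cf ev cf' :
  iter_step reeval cf ev cf' -> wf_config cf -> wf_config cf'.
Proof.
case=> [{}cf o1 o2 e openE _ _ | {}cf o1 o2 e openE _ _ _ _
        | {}cf o1 o2 e ts openE _ _ _ _ _ tsE] wf_cf;
  have [e_known rest_known] := known_popped wf_cf openE;
  have [Preal knownE _ closed_known reach] := wf_cf.
- by split.
- split=> //=; last exact: RIref.
  by case: (h _ _) => [hv|] // x; rewrite in_cons => /orP[/eqP-> // | /rest_known].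
- apply: foldl_process_succ_ind; [| | exact: wf_expand_start ..].
    by move=> cf0 t wf0 tT src_known _; apply: wf_process_succ.
  by move=> t; rewrite tsE => /andP[tT /eqP ->].
Qed.

Lemma iter_step_g_le reeval cf ev cf' x v :
  iter_step reeval cf ev cf' -> g_le (cp cf) x v -> g_le (cp cf') x v.
Proof. by case=> // {}cf o1 o2 e ts _ _ _ _ _ _ _ le_v; apply: foldl_process_succ_g_le. Qed.

Lemma iter_step_expand_g_le reeval cf x cf' g par t :
  iter_step reeval cf (EExpand x) cf' -> cp cf x = Some (g, par) ->
  t \in T -> src t = x -> g_le (cp cf') (tgt t) (g + c (lab t)).
Proof.
move eqev: (EExpand x) => ev step; case: step eqev => // {}cf o1 o2 e ts _ _ _ _ _ _ tsE [ex].
move=> Px tT tx; apply: foldl_process_succ_g_le_tgt; first by rewrite tsE tT tx ex eqxx.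
by exists g, par; rewrite /= tx Px.
Qed.

Lemma wf_init_config : wf_config (init_config R S L sI Ih ih0 h).
Proof.
split=> //=.
- move=> x g par; rewrite /pinit; case: eqP => // -> [<- _].
  by exists [::]; rewrite /path_cost big_nil.
- by move=> x; rewrite in_set1 /pinit; case: eqP.
- by case: (h sI ih0) => [hv|] e //; rewrite mem_seq1 => /eqP ->; rewrite in_set1 eqxx.
- exact: sub0set.
- exact: RI0.
Qed.

Section Tracking.
Variable y : S.
Variable gy : R.
Hypothesis gy_opt : is_gstar R S L c T sI y gy.
Hypothesis y_solvable : hstar_finite S L T SG y.
Hypothesis h_safe : dyn_safe R S L T sI SG Ih ih0 hupd href h.

(* [St] abstracts "y is settled by now", so that one step can be analysed
   without reference to the run. *)
Definition tracks (St : Prop) (cf : config) :=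
  (forall par, cp cf y = Some (gy, par) -> (exists hv, (y, gy, hv) \in open cf) \/ St) /\
  (forall par, y \in closed cf -> cp cf y = Some (gy, par) -> St).

Lemma h_reachable_finite ih K : reach_info ih K -> exists hv, h y ih = Some hv.
Proof.
move=> reach; case hy: (h y ih) => [hv|]; first by exists hv.
by case: (h_safe (ex_intro _ K reach) hy y_solvable).
Qed.

Lemma tracks_init_config St : tracks St (init_config R S L sI Ih ih0 h).
Proof.
split=> par /=; last by rewrite in_set0.
rewrite /pinit; case: eqP => // y_sI [gy0 _]; left.
have [hv hv_def] := h_reachable_finite (RI0 S L T sI Ih ih0 hupd href).
by rewrite -y_sI hv_def; exists hv; rewrite /gval /pinit y_sI eqxx -gy0 mem_head.
Qed.

Lemma process_succ_attains_gy cf t : wf_config cf -> t \in T -> src t \in known cf ->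
  (forall par, cp cf y <> Some (gy, par)) ->
  forall par, cp (process_succ cf t) y = Some (gy, par) ->
  (exists hv, (y, gy, hv) \in open (process_succ cf t)) /\ y \notin closed (process_succ cf t).
Proof.
move=> [Preal knownE _ closed_known reach] tT src_known not_gy par.
rewrite cp_process_succ => Py.
case: (pupdateP (cp cf) t y) => [unchanged|[yt _]].
  by case: (not_gy par); rewrite -unchanged.
have [hv hv_def] : exists hv, h y (hupd (ch cf) t) = Some hv.
  by apply: (@h_reachable_finite _ (tgt t |: known cf)); apply: RIupd.
have gvalE : gval (pupdate (cp cf) t) y = gy by rewrite /gval Py.
rewrite /process_succ -yt hv_def gvalE.
case y_known: (y \in known cf); last first.
  split; first by exists hv; rewrite mem_head.
  by apply/negP => /(subsetP closed_known); rewrite y_known.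
move: (y_known); rewrite knownE; case Pold: (cp cf y) => [[g0 par0]|] // _.
have gy_lt : gy < gval (cp cf) y.
  rewrite /gval Pold lt_neqAle (g_realized_ge Preal Pold gy_opt.2) andbT.
  by apply/eqP => gy_g0; apply: (not_gy par0); rewrite Pold gy_g0.
by rewrite gy_lt /=; split; [exists hv; rewrite mem_head | rewrite in_setD1 eqxx].
Qed.

Lemma tracks_process_succ St cf t : wf_config cf -> t \in T -> src t \in known cf ->
  tracks St cf -> tracks St (process_succ cf t).
Proof.
move=> wf_cf tT src_known [open_gy closed_gy].
have from_above : (forall par, cp cf y <> Some (gy, par)) -> tracks St (process_succ cf t).
  move=> not_gy; split=> [par | par y_closed] /(process_succ_attains_gy wf_cf tT src_known not_gy).
    by case=> in_open _; left.
  by case=> _; rewrite y_closed.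
case Pold: (cp cf y) => [[g0 par0]|]; last by apply: from_above => par; rewrite Pold.
case: (eqVneq g0 gy) => [g0_gy | g0_ne]; last first.
  by apply: from_above => par; rewrite Pold => -[/eqP]; rewrite (negbTE g0_ne).
rewrite g0_gy in Pold; split=> [_ _ | par y_closed _].
  case: (open_gy par0 Pold) => [[hv hv_in] | St_holds]; last by right.
  by left; exists hv; apply: open_process_succ_sub.
by apply: (closed_gy par0) Pold; apply: (subsetP (closed_process_succ cf t)).
Qed.

Lemma tracks_pop St cf o1 o2 e par : open cf = o1 ++ e :: o2 -> tracks St cf ->
  cp cf y = Some (gy, par) ->
  [\/ exists hv, (y, gy, hv) \in o1 ++ o2, St | e.1.1 = y].
Proof.
move=> openE [open_gy _] /open_gy[[hv] | ]; last by constructor 2.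
by rewrite openE mem_cat_cons => /orP[/eqP <- | hv_in]; [constructor 3 | constructor 1; exists hv].
Qed.

Lemma tracks_iter_step reeval St St' cf ev cf' :
  iter_step reeval cf ev cf' -> wf_config cf -> tracks St cf -> (St -> St') ->
  (forall par, ev = EExpand y -> cp cf y = Some (gy, par) -> St') -> tracks St' cf'.
Proof.
case=> [{}cf o1 o2 e openE _ e_closed | {}cf o1 o2 e openE _ _ _ _
        | {}cf o1 o2 e ts openE _ _ _ _ _ tsE] wf_cf tracks_cf St_St' expanded;
  have [_ closed_gy] := tracks_cf; have [e_known _] := known_popped wf_cf openE.
- split=> //= par; last by move=> y_closed Py; apply/St_St'/(closed_gy par).
  move=> Py; case: (tracks_pop openE tracks_cf Py) => [hv_in | /St_St' | e_y];
    [by left | by right |].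
  by right; apply/St_St'/(closed_gy par) => //; rewrite -e_y.
- split=> //= par; last by move=> y_closed Py; apply/St_St'/(closed_gy par).
  move=> Py; case: (tracks_pop openE tracks_cf Py) => [[hv hv_in] | /St_St' | e_y]; last 2 first.
  + by right.
  + have [_ _ _ _ reach] := wf_cf.
    have [hv hv_def] : exists hv, h y (href (ch cf) y) = Some hv.
      by apply: (@h_reachable_finite _ (known cf)); apply: RIref reach _; rewrite -e_y.
    by rewrite e_y hv_def; left; exists hv; rewrite /gval Py mem_head.
  + by left; exists hv; case: (h _ _) => [hv'|]; rewrite ?in_cons hv_in ?orbT.
- apply: foldl_process_succ_ind; [| | exact: wf_expand_start |].
  + by move=> cf0 t wf0 tT src_known; apply: tracks_process_succ.
  + by move=> t; rewrite tsE => /andP[tT /eqP ->].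
  split=> /= par.
    move=> Py; case: (tracks_pop openE tracks_cf Py) => [hv_in | /St_St' | e_y];
      [by left | by right |].
    by right; apply: (expanded par) => //; rewrite e_y.
  rewrite in_setU1 => /orP[/eqP y_e | y_closed] Py.
    by apply: (expanded par) => //; rewrite -y_e.
  by apply/St_St'/(closed_gy par).
Qed.

Section Run.
Variable reeval : bool.
Variable run : nat -> config.
Variable ev : nat -> event S.
Variable n : nat.
Hypothesis run_init : run 1%N = init_config R S L sI Ih ih0 h.
Hypothesis run_step :
  forall k, (1 <= k < n)%N -> iter_step reeval (run k) (ev k) (run k.+1).

Local Notation settled := (Pilot.Defs.settled R S L c T sI Ih run ev).

Lemma run_wf k : (1 <= k <= n)%N -> wf_config (run k).
Proof.
move: k; apply: nat_ind_between => [|k' /run_step /wf_iter_step //].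
by rewrite run_init; apply: wf_init_config.
Qed.

Lemma run_g_le j k x v : (1 <= j)%N -> (j <= k <= n)%N ->
  g_le (cp (run j)) x v -> g_le (cp (run k)) x v.
Proof.
move=> j_pos jk le_v; move: k jk; apply: nat_ind_between => // k /andP[jk kn].
by apply: iter_step_g_le; apply: run_step; rewrite (leq_trans j_pos jk).
Qed.

Lemma settledS k x : settled k x -> settled k.+1 x.
Proof.
case=> k' [/andP[k'_pos k'k] evk' opt]; exists k'; split=> //.
by rewrite k'_pos ltnW.
Qed.

Lemma settled_expand k x g par : (1 <= k)%N -> ev k = EExpand x ->
  cp (run k) x = Some (g, par) -> is_gstar R S L c T sI x g -> settled k.+1 x.
Proof. by move=> k_pos evk Px g_opt; exists k; rewrite k_pos ltnSn; split=> //; exists g, par. Qed.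

Lemma run_tracks k : (1 <= k <= n)%N -> tracks (settled k y) (run k).
Proof.
move: k; apply: nat_ind_between => [|k' k'_bounds tracks_k'].
  by rewrite run_init; apply: tracks_init_config.
have [k'_pos _] := andP k'_bounds.
apply: tracks_iter_step (run_step k'_bounds) _ tracks_k' (@settledS k' y) _.
  by apply: run_wf; rewrite k'_pos ltnW //; case/andP: k'_bounds.
by move=> par evk' Py; apply: settled_expand evk' Py gy_opt.
Qed.

Lemma settled_pred_optimal s l p : (1 <= n)%N -> settled n s ->
  optimal_path R S L c T sI (rcons p (s, l, y)) y ->
  exists par, cp (run n) y = Some (path_cost (rcons p (s, l, y)), par).
Proof.
move=> n_pos [k [/andP[k_pos kn] evk [g [par [Ps s_opt]]]]] [path_y path_y_min].
have [path_s slyT _] := (is_path_rcons sI p (s, l, y) y).1 path_y.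
have step_k := run_step (introT andP (conj k_pos kn)); rewrite evk in step_k.
have le_k : g_le (cp (run k.+1)) y (g + c l) := iter_step_expand_g_le step_k Ps slyT erefl.
have [g' [par' [Py g'_le]]] : g_le (cp (run n)) y (g + c l).
  by apply: run_g_le le_k; rewrite // kn leqnn.
have [Preal _ _ _ _] : wf_config (run n) by apply: run_wf; rewrite n_pos leqnn.
exists par'; rewrite Py; congr (Some (_, _)); apply: le_anti.
rewrite (g_realized_ge Preal Py path_y_min) andbT; apply: le_trans g'_le _.
by rewrite path_cost_rcons lerD2r; apply: s_opt.2.
Qed.

End Run.
End Tracking.
End DynamicAStar.

Unset Implicit Arguments.

Theorem lemma2 (R : realFieldType) (S L : finType) (c : L -> R)
  (T : {set trans S L}) (sI : S) (SG : {set S})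
  (Ih : Type) (ih0 : Ih) (hupd : Ih -> trans S L -> Ih) (href : Ih -> S -> Ih)
  (h : S -> Ih -> option R) (reeval : bool)
  (c_ge0 : forall l, 0 <= c l)
  (h_ge0 : forall x io r, h x io = Some r -> 0 <= r)
  (hsafe : dyn_safe R S L T sI SG Ih ih0 hupd href h)
  (run : nat -> config R S L Ih) (ev : nat -> event S) (i : nat)
  (Hi : (1 <= i)%N)
  (Hinit : run 1%N = init_config R S L sI Ih ih0 h)
  (Hsteps : forall k, (1 <= k < i)%N ->
     iter_step R S L c T SG Ih hupd href h reeval (run k) (ev k) (run k.+1))
  (Hopen : open R S L Ih (run i) != [::])
  (s s' : S) (Hs : settled R S L c T sI Ih run ev i s)
  (Hs' : hstar_finite S L T SG s')
  (p : seq (trans S L)) (l : L)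
  (Hp : optimal_path R S L c T sI (rcons p (s, l, s')) s') :
  (exists ghat hh, (s', ghat, hh) \in open R S L Ih (run i) /\ is_gstar R S L c T sI s' ghat)
  \/ settled R S L c T sI Ih run ev i s'.
Proof.
have gs'_opt := optimal_path_gstar Hp.
have [par Ps'] := settled_pred_optimal Hinit Hsteps Hi Hs Hp.
have i_bounds : (1 <= i <= i)%N by rewrite Hi leqnn.
have [open_gs' _] := run_tracks gs'_opt Hs' hsafe Hinit Hsteps i_bounds.
case: (open_gs' par Ps') => [[hv hv_in] | s'_settled]; last by right.
by left; exists (path_cost R S L c (rcons p (s, l, s'))), hv.
Qed.
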